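(* Let $\mathcal{H}$ be a supersolvable arrangement of rank $n\ge 3$ with decomposition $\mathcal{H}=\mathcal{H}_0\sqcup\mathcal{H}_1$ as in the definition of supersolvability, and let $\rho:\mathcal{R}(\mathcal{H})\to\mathcal{R}(\mathcal{H}_0)$ map every region of $\mathcal{H}$ to the region of $\mathcal{H}_0$ containing it. Then: (i) for any $R\in\mathcal{R}(\mathcal{H}_0)$, the subgraph of $G(\mathcal{H})$ induced by $\rho^{-1}(R)$ is a path of length $|\mathcal{H}_1|$; (ii) if $R,R'\in\mathcal{R}(\mathcal{H}_0)$ are adjacent in $G(\mathcal{H}_0)$, then, writing $\ell=|\mathcal{H}_1|$, the two paths $\rho^{-1}(R)$ and $\rho^{-1}(R')$ can be enumerated along the paths as $A_0,\dots,A_\ell$ and $B_0,\dots,B_\ell$ such that $\{A_0,B_0\}$ and $\{A_\ell,B_\ell\}$ are edges of $G(\mathcal{H})$ and every edge of $G(\mathcal{H})$ between the two paths is of the form $\{A_i,B_i\}$ for some $i$; (iii) if $R,R'\in\mathcal{R}(\mathcal{H}_0)$ are not adjacent in $G(\mathcal{H}_0)$, then there are no edges of $G(\mathcal{H})$ between $\rho^{-1}(R)$ and $\rho^{-1}(R')$.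
   Context: A hyperplane arrangement is a finite set of linear hyperplanes in $\mathbb{R}^d$; its rank is the dimension of the span of the normals; $\mathcal{R}(\mathcal{H})$ denotes its set of regions (connected components of the complement of the union of the hyperplanes), and $G(\mathcal{H})$ its graph of regions (regions adjacent iff separated by exactly one hyperplane). An arrangement of rank $n$ is supersolvable if $n\le 2$, or $n\ge 3$ and $\mathcal{H}=\mathcal{H}_0\sqcup\mathcal{H}_1$ with both parts nonempty, $\mathcal{H}_0$ supersolvable of rank $n-1$, and for any distinct $H',H''\in\mathcal{H}_1$ some $H\in\mathcal{H}_0$ satisfies $H'\cap H''\subseteq H$. The length of a path is its number of edges. *)

From HB Require Import structures.
From mathcomp Require Import all_boot all_order all_algebra.
From mathcomp Require Import all_classical all_reals all_analysis.
Set Implicit Arguments. Unset Strict Implicit. Unset Printing Implicit Defensive.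
Import Order.TTheory GRing.Theory Num.Theory.
Import numFieldNormedType.Exports.
Local Open Scope classical_set_scope.
Local Open Scope ring_scope.

Section Arrangements.
(* A hyperplane arrangement is
   given by a finite index type I and nonzero normals a : I -> 'rV_d; the
   hyperplane of index i is ker (a i).  Sub-arrangements are subsets S of I. *)
Variables (R : realType) (d : nat) (I : finType) (a : I -> 'rV[R]_d).

Definition dotv (u x : 'rV[R]_d) : R := \sum_(j < d) u 0 j * x 0 j.

Definition hyp (i : I) : set 'rV[R]_d := [set x | dotv (a i) x = 0].

Definition arr_rank (S : {set I}) : nat :=
  \dim <<[seq a i | i <- enum S]>>%VS.

Definition arr_compl (S : {set I}) : set 'rV[R]_d :=
  [set x | forall i, i \in S -> ~ hyp i x].

Definition regions (S : {set I}) : set (set 'rV[R]_d) :=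
  [set C : set 'rV[R]_d | exists2 x, arr_compl S x & C = connected_component (arr_compl S) x].

Definition separates (i : I) (C C' : set 'rV[R]_d) : Prop :=
  (C `<=` [set x | 0 < dotv (a i) x] /\ C' `<=` [set x | dotv (a i) x < 0]) \/
  (C `<=` [set x | dotv (a i) x < 0] /\ C' `<=` [set x | 0 < dotv (a i) x]).

Definition region_adj (S : {set I}) (C C' : set 'rV[R]_d) : Prop :=
  regions S C /\ regions S C' /\
  exists i, [/\ i \in S, separates i C C' &
                forall j, j \in S -> separates j C C' -> j = i].

Inductive supersolvable : {set I} -> Prop :=
| ss_small (S : {set I}) : (arr_rank S <= 2)%N -> supersolvable S
| ss_step (S S0 : {set I}) :
    (3 <= arr_rank S)%N -> S0 \subset S -> S0 != finset.set0 -> S :\: S0 != finset.set0 ->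
    supersolvable S0 -> arr_rank S0 = (arr_rank S).-1 ->
    (forall i j, i \in S :\: S0 -> j \in S :\: S0 -> i != j ->
       exists2 k, k \in S0 & hyp i `&` hyp j `<=` hyp k) ->
    supersolvable S.

End Arrangements.

Definition path_enum {T : Type} (E : T -> T -> Prop) (P : set T) (l : nat)
  (A : nat -> T) : Prop :=
  [/\ (forall i j, (i <= l)%N -> (j <= l)%N -> A i = A j -> i = j),
      P = A @` [set i | (i <= l)%N] &
      (forall i j, (i <= l)%N -> (j <= l)%N ->
         (E (A i) (A j) <-> (i.+1 = j \/ j.+1 = i)))].

From HB Require Import structures.
From mathcomp Require Import all_boot all_order all_algebra.
From mathcomp Require Import all_classical all_reals all_analysis.
From mathcomp Require Import lra ring zify.
Import Order.TTheory GRing.Theory Num.Theory.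
Import numFieldNormedType.Exports.
Local Open Scope classical_set_scope.
Local Open Scope ring_scope.
Set Implicit Arguments. Unset Strict Implicit. Unset Printing Implicit Defensive.

(** Since rank H0 = rank H - 1, some normal of H1 lies outside the span of
   the normals of H0, so there is a direction v lying on every hyperplane of
   H0; the modular condition (any two hyperplanes of H1 meet inside one of
   H0) then forces v off every hyperplane of H1.  Moving along v inside a
   region C0 of H0, the line x + t v crosses hyperplane h of H1 at
   t = - height h x, where height h x = f_h(x) / f_h(v) and f_h is the
   linear form defining h.  On the complement of H0 these heights are
   pairwise distinct (again by modularity), so their order is constant on
   C0.  Hence the set [above x] of hyperplanes of H1 with positive height is
   an upper set for this order: the regions of H inside C0 are indexed by
   k = #|above x| in 0..|H1|, and two of them are separated by exactly
   |k - k'| hyperplanes.  For regions over two different regions of H0, the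
   separating hyperplanes are those of H0 separating the base regions plus
   the symmetric difference of the two [above] sets, which gives (ii) and
   (iii). *)

Section DotProduct.
Variables (R : realType) (d : nat).
Implicit Types (u w x y : 'rV[R]_d) (t : R).

Lemma dotvDr u x y : dotv u (x + y) = dotv u x + dotv u y.
Proof. by rewrite /dotv -big_split; apply: eq_bigr => j _; rewrite mxE mulrDr. Qed.

Lemma dotvZr u x t : dotv u (t *: x) = t * dotv u x.
Proof. by rewrite /dotv mulr_sumr; apply: eq_bigr => j _; rewrite mxE mulrCA. Qed.

Lemma dotvBr u x y : dotv u (x - y) = dotv u x - dotv u y.
Proof. by rewrite dotvDr -scaleN1r dotvZr mulN1r. Qed.

Lemma dotvZl u x t : dotv (t *: u) x = t * dotv u x.
Proof. by rewrite /dotv mulr_sumr; apply: eq_bigr => j _; rewrite mxE mulrA. Qed.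

Lemma dotvBl u w x : dotv (u - w) x = dotv u x - dotv w x.
Proof.
by rewrite /dotv -sumrB; apply: eq_bigr => j _; rewrite !mxE mulrBl.
Qed.

Lemma dotv_segment u x y t :
  dotv u (x + t *: (y - x)) = (1 - t) * dotv u x + t * dotv u y.
Proof. by rewrite dotvDr dotvZr dotvBr; ring. Qed.

Lemma dotv_gt0 u : u != 0 -> 0 < dotv u u.
Proof.
move=> u0; rewrite lt0r sumr_ge0 ?andbT => [|j _]; last by rewrite -expr2 sqr_ge0.
apply: contra u0 => /eqP/psumr_eq0P u2_0; apply/eqP/rowP => j; rewrite mxE.
by apply/eqP; rewrite -sqrf_eq0 expr2 u2_0 // => i _; rewrite -expr2 sqr_ge0.
Qed.

Lemma dotv_continuous u : continuous (dotv u).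
Proof.
rewrite /dotv; elim: (index_enum _) => [|j s IH] x.
  by under eq_fun do rewrite big_nil; exact: cst_continuous.
under eq_fun do rewrite big_cons.
apply: (@continuousD _ _ _ (fun y : 'rV[R]_d => u 0 j * y 0 j)) (IH x).
apply: (@continuousM _ _ (fun=> u 0 j) (fun y : 'rV[R]_d => y 0 j)).
  exact: cst_continuous.
exact: coord_continuous.
Qed.

Lemma segment_continuous x y : continuous (fun t : R => x + t *: (y - x)).
Proof.
move=> t; apply: (@continuousD _ _ _ (fun=> x) (fun t : R => t *: (y - x))).
  exact: cst_continuous.
by apply: (@continuousZr_tmp _ _ _ (fun t : R => t)); apply: cvg_id.
Qed.

Import VectorInternalTheory.

Lemma exists_dotv_orthogonal (U : {vspace 'rV[R]_d}) u : u \notin U ->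
  exists v, (forall w, w \in U -> dotv w v = 0) /\ dotv u v != 0.
Proof.
have memU w : (w \in U) = (v2r w <= vs2mx U)%MS by rewrite unfold_in /= /vline mx2vsK.
pose C := cokermx (vs2mx U); rewrite memU submxE => uC0.
have /existsP[k uCk] : [exists k, (v2r u *m C) 0 k != 0].
  move: uC0; apply: contraR => /existsPn uC0.
  by apply/eqP/rowP => k; rewrite [RHS]mxE; apply/eqP/negPn/uC0.
pose form w := (v2r w *m C) 0 k.
have formE w : dotv w (\row_j form (delta_mx 0 j)) = form w.
  rewrite /form {2}(row_sum_delta w) linear_sum /= mulmx_suml summxE /dotv.
  by apply: eq_bigr => j _; rewrite mxE linearZ /= -scalemxAl [RHS]mxE ?mxE.
exists (\row_j form (delta_mx 0 j)); split=> [w|]; last by rewrite formE.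
by rewrite formE memU submxE /form => /eqP ->; rewrite mxE.
Qed.

End DotProduct.

Section RealSigns.
Variable R : realType.
Implicit Types p q t x y : R.

Lemma convex_comb_sign p q t : 0 <= t <= 1 -> p != 0 -> q != 0 ->
  (0 < q) = (0 < p) -> ((1 - t) * p + t * q != 0) /\ (0 < (1 - t) * p + t * q) = (0 < p).
Proof.
move=> /andP[t0 t1] p0 q0 qp.
case: (ltrgtP 0 p) qp => [pgt0|plt0|/eqP]; last by rewrite eq_sym (negbTE p0).
  move=> qgt0; have : 0 < (1 - t) * p + t * q by nra.
  by move=> cgt0; rewrite gt_eqF // cgt0.
move=> /negbT; rewrite -leNgt le_eqVlt (negbTE q0) /= => qlt0.
have : (1 - t) * p + t * q < 0 by nra.
by move=> clt0; rewrite lt_eqF // ltNge ltW.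
Qed.

Lemma exists_segment_root p q : p != 0 -> q != 0 -> (0 < p) != (0 < q) ->
  exists2 t, 0 <= t <= 1 & p + t * (q - p) = 0.
Proof.
move=> p0 q0; case: (ltrgtP 0 p) p0 => [pgt0|plt0|] //= _ pq.
  have qlt0 : q < 0 by move: pq q0; case: (ltrgtP q 0).
  exists (p / (p - q)); last by field; lra.
  by rewrite divr_ge0 ?ler_pdivrMr /=; lra.
have qgt0 : 0 < q by move: pq q0; case: (ltrgtP q 0).
exists (- p / (q - p)); last by field; lra.
by rewrite divr_ge0 ?ler_pdivrMr /=; lra.
Qed.

Lemma is_interval_sign_change (E : set R) p q : is_interval E -> E p -> E q ->
  p != 0 -> q != 0 -> (0 < p) != (0 < q) -> E 0.
Proof.
move=> EI Ep Eq p0 q0; case: (ltrgtP 0 p) p0 => [pgt0|plt0|] //= _ pq.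
  have qlt0 : q < 0 by move: pq q0; case: (ltrgtP q 0).
  by apply: (EI q p) => //; rewrite !ltW.
have qgt0 : 0 < q by move: pq q0; case: (ltrgtP q 0).
by apply: (EI p q) => //; rewrite !ltW.
Qed.

Lemma divr_gt0_sign x y : x != 0 -> y != 0 -> (0 < x / y) = ((0 < x) == (0 < y)).
Proof.
move=> x0 y0; case: (ltrgtP 0 y) y0 => [ygt0|ylt0|] //= _.
  by rewrite pmulr_lgt0 ?invr_gt0 // eqb_id.
rewrite nmulr_lgt0 ?invr_lt0 //.
by case: (ltrgtP x 0) x0; case: (ltrgtP y 0) ylt0.
Qed.

End RealSigns.

Section Thresholds.
Variables (R : realType) (I : finType) (S : {set I}) (w : I -> R).

Lemma exists_lower_bound : exists t, forall h, h \in S -> t < w h.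
Proof.
exists (\big[Order.min/0]_(h in S) w h - 1) => h hS.
by rewrite ltrBlDr (le_lt_trans (bigmin_le_cond _ _ hS)) // ltrDl.
Qed.

Lemma exists_gap x : exists2 y, x < y & forall h, h \in S -> x < w h -> y < w h.
Proof.
pose m := \big[Order.min/x + 1]_(h in S | x < w h) w h.
have xm : x < m by apply/bigmin_gtP; split=> [|h /andP[]//]; rewrite ltrDl.
exists ((x + m) / 2) => [|h hS xh]; first lra.
have : m <= w h by apply: bigmin_le_cond; rewrite hS.
lra.
Qed.

Hypothesis w_inj : {in S &, injective w}.

Lemma exists_threshold k : (k <= #|S|)%N ->
  exists t, (forall h, h \in S -> w h != t) /\ #|[set h in S | w h < t]| = k.
Proof.
elim: k => [_|k IH kS].
  have [t tw] := exists_lower_bound; exists t; split=> [h /tw th|]; first by rewrite gt_eqF.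
  apply/eqP; rewrite cards_eq0; apply/eqP/setP => h; rewrite !inE.
  by case: (boolP (h \in S)) => //= /tw/ltW; rewrite leNgt => /negbTE.
have [t [tw tk]] := IH (ltnW kS).
have [g0 g0S tg0] : exists2 g0, g0 \in S & t < w g0.
  apply/exists_inP; move: kS; apply: contraLR => /exists_inPn allt.
  rewrite -leqNgt -tk subset_leq_card //; apply/fintype.subsetP => h hS; rewrite inE hS.
  by rewrite lt_neqAle tw //= leNgt allt.
case: (@arg_minP _ _ _ g0 (fun h => (h \in S) && (t < w h)) w) => [|g /andP[gS tg] gmin].
  by rewrite g0S.
have [t' gt' gap] := exists_gap (w g).
exists t'; split=> [h hS|].
  by apply/eqP => wht'; have := gap h hS; rewrite wht' ltxx gt' => /(_ isT).
have -> : [set h in S | w h < t'] = g |: [set h in S | w h < t].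
  apply/setP => h; rewrite !inE; case: (eqVneq h g) => [-> | hg] /=.
    by rewrite gS gt'.
  case: (boolP (h \in S)) => //= hS; case: (ltrgtP (w h) t) => [ht|th|/eqP].
  - by rewrite (lt_trans ht) // (lt_trans tg).
  - have gh : w g < w h.
      rewrite lt_neqAle gmin ?hS ?th // andbT.
      by apply: contra hg => /eqP/w_inj -> //.
    by rewrite ltNge ltW // gap.
  - by rewrite (negbTE (tw h hS)).
by rewrite cardsU1 tk inE gS /= ltNge (ltW tg).
Qed.

End Thresholds.

Section Cells.
Variables (R : realType) (d : nat) (I : finType) (a : I -> 'rV[R]_d).
Local Notation f i x := (dotv (a i) x).
Local Notation T := [set: I]%SET.
Implicit Types (S : {set I}) (p x y z : 'rV[R]_d).

Definition cell S p : set 'rV[R]_d :=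
  [set x | arr_compl a S x /\ forall i, i \in S -> (0 < f i x) = (0 < f i p)].

Definition sepset S x y := [set i in S | (0 < f i x) != (0 < f i y)].

Lemma arr_compl_neq0 S x i : arr_compl a S x -> i \in S -> f i x != 0.
Proof. by move=> Sx iS; apply/eqP; exact: Sx. Qed.

Lemma arr_compl_subset S S' x : S \subset S' -> arr_compl a S' x -> arr_compl a S x.
Proof. by move=> /fintype.subsetP SS' S'x i /SS'; exact: S'x. Qed.

Lemma cell_refl S p : arr_compl a S p -> cell S p p.
Proof. by []. Qed.

Lemma cell_eq S p x : cell S p x -> cell S x = cell S p.
Proof.
move=> [Sx px]; apply/seteqP; split=> y [Sy yx]; split=> // i iS.
  by rewrite yx // px.
by rewrite yx // -px.
Qed.

Lemma cell_convex S p x t : arr_compl a S p -> cell S p x -> 0 <= t <= 1 ->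
  cell S p (p + t *: (x - p)).
Proof.
move=> Sp [Sx px] t01; have sign i iS := convex_comb_sign t01
  (arr_compl_neq0 Sp iS) (arr_compl_neq0 Sx iS) (px i iS).
split=> [i iS|i iS]; rewrite /hyp /= dotv_segment; first exact/eqP/(sign i iS).1.
exact: (sign i iS).2.
Qed.

Lemma cell_sign_const S p x u : arr_compl a S p -> cell S p x ->
  (forall z, cell S p z -> dotv u z != 0) -> (0 < dotv u x) = (0 < dotv u p).
Proof.
move=> Sp px u0; apply/eqP; apply: contraT; rewrite eq_sym => ux.
have [t t01 ut] := exists_segment_root (u0 p (cell_refl Sp)) (u0 x px) ux.
have := u0 _ (cell_convex Sp px t01).
suff -> : dotv u (p + t *: (x - p)) = 0 by rewrite eqxx.
by rewrite dotv_segment -ut; ring.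
Qed.

Lemma connected_component_cell S p : arr_compl a S p ->
  connected_component (arr_compl a S) p = cell S p.
Proof.
move=> Sp; apply/seteqP; split=> [x px | x px].
  have Sx := connected_component_sub px; split=> // i iS.
  apply/eqP; apply: contraT => sx; exfalso.
  have /connected_intervalP fI : connected (dotv (a i) @` connected_component (arr_compl a S) p).
    apply: connected_continuous_connected; first exact: component_connected.
    exact/continuous_subspaceT/dotv_continuous.
  have [w pw /= wi0] : (dotv (a i) @` connected_component (arr_compl a S) p) 0.
    apply: (is_interval_sign_change fI _ _ (arr_compl_neq0 Sx iS) (arr_compl_neq0 Sp iS) sx).
      by exists x.
    by exists p => //; exact: connected_component_refl.
  exact: (connected_component_sub pw) i iS wi0.
have segp : (fun t => p + t *: (x - p)) @` `[0, 1] `<=` connected_component (arr_compl a S) p.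
  apply: connected_component_max.
  - by exists 0; rewrite /= ?in_itv /= ?lexx ?ler01 // scale0r addr0.
  - by move=> _ [t t01 <-]; rewrite /= in_itv /= in t01; case: (cell_convex Sp px t01).
  - apply: connected_continuous_connected; first exact: segment_connected.
    exact/continuous_subspaceT/segment_continuous.
by apply: segp; exists 1; rewrite /= ?in_itv /= ?lexx ?ler01 // scale1r addrC subrK.
Qed.

Lemma regionsP S C : regions a S C <-> exists2 p, arr_compl a S p & C = cell S p.
Proof. by split=> -[p Sp ->]; exists p; rewrite ?connected_component_cell. Qed.

Lemma regions_cell S p : arr_compl a S p -> regions a S (cell S p).
Proof. by move=> Sp; apply/regionsP; exists p. Qed.

Lemma arr_compl_lt0 S x i : arr_compl a S x -> i \in S -> (f i x < 0) = ~~ (0 < f i x).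
Proof. by move=> Sx iS; case: (ltrgtP (f i x) 0) (arr_compl_neq0 Sx iS). Qed.

Lemma separates_cell S x y i : arr_compl a S x -> arr_compl a S y -> i \in S ->
  separates a i (cell S x) (cell S y) <-> (0 < f i x) != (0 < f i y).
Proof.
move=> Sx Sy iS; have lt0 z := @arr_compl_lt0 S z i.
have pos z w : cell S w z -> (0 < f i z) = (0 < f i w) by case=> _ /(_ i iS).
have neg z w : cell S w z -> (f i z < 0) = ~~ (0 < f i w).
  by move=> /[dup] [[Sz _]] /pos <-; rewrite lt0.
split=> [[[xpos yneg]|[xneg ypos]]|].
- have /= := xpos x (cell_refl Sx); have /= := yneg y (cell_refl Sy).
  by rewrite lt0 // => /negbTE -> ->.
- have /= := xneg x (cell_refl Sx); have /= := ypos y (cell_refl Sy).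
  by rewrite lt0 // => -> /negbTE ->.
case: (boolP (0 < f i x)) => xi /= yi; [left|right]; split=> z /=.
- by move/pos ->.
- by move/neg ->.
- by move/neg ->.
- by move/pos ->; rewrite -(negbK (0 < f i y)) yi.
Qed.

Lemma region_adj_cell S x y : arr_compl a S x -> arr_compl a S y ->
  region_adj a S (cell S x) (cell S y) <-> #|sepset S x y| = 1%N.
Proof.
move=> Sx Sy; have sepP i (iS : i \in S) := separates_cell Sx Sy iS.
split=> [[_ [_ [i [iS sep_i uniq_i]]]]|/eqP/cards1P[i sep_xy]].
  apply/eqP/cards1P; exists i; apply/setP => j; rewrite !inE.
  apply/andP/eqP => [[jS /(sepP j jS)/(uniq_i j jS)] //|->].
  by split; last exact/sepP.
have : i \in sepset S x y by rewrite sep_xy inE.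
rewrite inE => /andP[iS sep_i].
do 2 (split; first exact: regions_cell).
exists i; split=> // [|j jS /(sepP j jS) sep_j]; first exact/sepP.
by apply/set1P; rewrite -sep_xy inE jS.
Qed.

Lemma cell_eq_sepset0 S x y : arr_compl a S x -> arr_compl a S y ->
  (cell S x = cell S y) <-> sepset S x y = finset.set0.
Proof.
move=> Sx Sy; split=> [xy|sep0].
  have [_ yx] : cell S x y by rewrite xy; exact: cell_refl.
  apply/setP => i; rewrite !inE; case: (boolP (i \in S)) => //= iS.
  by rewrite yx // eqxx.
apply/esym/cell_eq; split=> // i iS; apply/eqP; apply: contraT => sep_i.
have : i \in sepset S x y by rewrite inE iS eq_sym.
by rewrite sep0 inE.
Qed.

Lemma sepsetC S x y : sepset S x y = sepset S y x.
Proof. by apply/setP => i; rewrite !inE eq_sym. Qed.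

Lemma card_sepset_split S x y :
  #|sepset T x y| = (#|sepset S x y| + #|sepset (~: S) x y|)%N.
Proof.
rewrite -(cardsID S (sepset T x y)); congr (_ + _)%N; apply: eq_card => i.
  by rewrite !inE andbC.
by rewrite !inE andbC.
Qed.

Lemma region_adj_restrict S x y : arr_compl a T x -> arr_compl a T y ->
  region_adj a T (cell T x) (cell T y) ->
  cell S x = cell S y \/ region_adj a S (cell S x) (cell S y).
Proof.
move=> Tx Ty /(region_adj_cell Tx Ty); rewrite (card_sepset_split S) => sep1.
have [Sx Sy] := (arr_compl_subset (finset.subsetT S) Tx,
                 arr_compl_subset (finset.subsetT S) Ty).
have : (#|sepset S x y| <= 1)%N by rewrite -sep1 leq_addr.
rewrite leq_eqVlt ltnS leqn0 cards_eq0 => /orP[/eqP sepS1|/eqP sepS0].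
  by right; apply/(region_adj_cell Sx Sy).
by left; apply/(cell_eq_sepset0 Sx Sy).
Qed.

Lemma fiber_cellP S p C : arr_compl a S p ->
  (regions a T C /\ C `<=` cell S p) <->
  exists x, [/\ cell S p x, arr_compl a T x & C = cell T x].
Proof.
move=> Sp; split=> [[/regionsP[x Tx ->] Cp]|[x [px Tx ->]]].
  by exists x; split=> //; exact/Cp/cell_refl.
split=> [|z [Tz zx]]; first exact: regions_cell.
split=> [|i iS]; first exact: arr_compl_subset (finset.subsetT S) Tz.
by rewrite zx ?inE // px.2.
Qed.

End Cells.

Section ModularDirection.
Variables (R : realType) (d : nat) (I : finType) (a : I -> 'rV[R]_d).
Local Notation f i x := (dotv (a i) x).

Lemma hyp_proj h (v x : 'rV[R]_d) : f h v != 0 -> hyp a h (x - (f h x / f h v) *: v).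
Proof. by move=> hv; rewrite /hyp /= dotvBr dotvZr mulfVK // subrr. Qed.

Lemma hyp_subset_eq i k : a i != 0 -> a k != 0 -> hyp a i `<=` hyp a k ->
  hyp a i = hyp a k.
Proof.
move=> ai0 ak0 ik; apply/seteqP; split=> // x.
have ii0 : f i (a i) != 0 by rewrite gt_eqF ?dotv_gt0.
have fk y : f k y = f i y / f i (a i) * f k (a i).
  by have /ik := hyp_proj y ii0; rewrite /hyp /= dotvBr dotvZr => /eqP; rewrite subr_eq0 => /eqP.
have ki0 : f k (a i) != 0.
  by apply: contraTneq (dotv_gt0 ak0) => ki0; rewrite fk ki0 mulr0 ltxx.
rewrite /hyp /= fk => /eqP; rewrite !mulf_eq0 invr_eq0 (negbTE ii0) (negbTE ki0) !orbF.
by move/eqP.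
Qed.

Lemma exists_normal_notin_span (S : {set I}) : (arr_rank a S < arr_rank a [set: I])%N ->
  exists2 h, h \notin S & a h \notin <<[seq a i | i <- enum S]>>%VS.
Proof.
move=> rankS; apply/exists_inP; move: rankS; apply: contraLR => /exists_inPn inspan.
rewrite -leqNgt; apply/dimvS/span_subvP => _ /mapP[i _ ->].
case: (boolP (i \in S)) => iS; last by have := inspan i iS; rewrite negbK.
by apply: memv_span; rewrite map_f ?mem_enum.
Qed.

Lemma exists_modular_direction (H0 : {set I}) :
  (forall i, a i != 0) -> (forall i j, hyp a i = hyp a j -> i = j) ->
  (arr_rank a H0 < arr_rank a [set: I])%N ->
  (forall i j, i \in ~: H0 -> j \in ~: H0 -> i != j ->
     exists2 k, k \in H0 & hyp a i `&` hyp a j `<=` hyp a k) ->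
  exists v, (forall i, i \in H0 -> f i v = 0) /\ (forall h, h \in ~: H0 -> f h v != 0).
Proof.
move=> a0 a_inj rank0 modular.
have [h hH0 ah] := exists_normal_notin_span rank0.
have [v [v0 hv]] := exists_dotv_orthogonal ah.
have H0v i : i \in H0 -> f i v = 0.
  by move=> iH0; apply: v0; rewrite memv_span // map_f ?mem_enum.
exists v; split=> // g; rewrite inE => gH0; case: (eqVneq g h) => [->//|gh].
have [k kH0 ghk] : exists2 k, k \in H0 & hyp a g `&` hyp a h `<=` hyp a k.
  by apply: modular gh; rewrite inE.
apply: contra gH0 => /eqP gv; suff gk : hyp a g `<=` hyp a k.
  by rewrite (a_inj _ _ (hyp_subset_eq (a0 g) (a0 k) gk)).
move=> x gx; have /ghk : (hyp a g `&` hyp a h) (x - (f h x / f h v) *: v).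
  split; last exact: hyp_proj.
  by rewrite /hyp /= dotvBr dotvZr gv mulr0 subr0.
by rewrite /hyp /= dotvBr dotvZr (H0v k kH0) mulr0 subr0.
Qed.

End ModularDirection.

Section Fibers.
Variables (R : realType) (d : nat) (I : finType) (a : I -> 'rV[R]_d).
Variables (H0 : {set I}) (v : 'rV[R]_d).
Local Notation f i x := (dotv (a i) x).
Local Notation T := [set: I]%SET.
Local Notation cell := (cell a).
Local Notation sepset := (sepset a).
Local Notation l := #|~: H0|.
Hypothesis modular : forall i j, i \in ~: H0 -> j \in ~: H0 -> i != j ->
  exists2 k, k \in H0 & hyp a i `&` hyp a j `<=` hyp a k.
Hypothesis H0v : forall i, i \in H0 -> f i v = 0.
Hypothesis H1v : forall h, h \in ~: H0 -> f h v != 0.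
Implicit Types (p x y : 'rV[R]_d) (t : R).

Definition height h x := f h x / f h v.

Definition above x := [set h in ~: H0 | 0 < height h x].

Lemma height_translate h x t : h \in ~: H0 -> height h (x + t *: v) = height h x + t.
Proof. by move=> hH1; rewrite /height dotvDr dotvZr mulrDl mulfK ?H1v. Qed.

Lemma height_eq0 h x : h \in ~: H0 -> (height h x == 0) = (f h x == 0).
Proof. by move=> hH1; rewrite /height mulf_eq0 invr_eq0 (negbTE (H1v hH1)) orbF. Qed.

Lemma cell_translate p t : arr_compl a H0 p -> cell H0 p (p + t *: v).
Proof.
have fE i : i \in H0 -> f i (p + t *: v) = f i p.
  by move=> iH0; rewrite dotvDr dotvZr H0v ?mulr0 ?addr0.
by move=> H0p; split=> i iH0; rewrite ?/hyp /= fE //; exact: H0p.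
Qed.

Lemma height_neq y h h' : arr_compl a H0 y -> h \in ~: H0 -> h' \in ~: H0 ->
  h != h' -> height h y != height h' y.
Proof.
move=> H0y hH1 h'H1 hh'; apply/eqP => height_hh'.
have [k kH0 hh'k] := modular hH1 h'H1 hh'.
have /hh'k : (hyp a h `&` hyp a h') (y - height h y *: v).
  by split; [|rewrite height_hh']; apply: hyp_proj; exact: H1v.
by rewrite /hyp /= dotvBr dotvZr (H0v kH0) mulr0 subr0; exact: H0y.
Qed.

Lemma height_order p x h h' : arr_compl a H0 p -> cell H0 p x ->
  h \in ~: H0 -> h' \in ~: H0 -> h != h' ->
  (0 < height h' x - height h x) = (0 < height h' p - height h p).
Proof.
move=> H0p px hH1 h'H1 hh'.
have heightE z : height h' z - height h z = dotv ((f h' v)^-1 *: a h' - (f h v)^-1 *: a h) z.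
  by rewrite dotvBl !dotvZl /height !(mulrC _^-1).
rewrite !heightE; apply: (cell_sign_const H0p px) => z [H0z _].
by rewrite -heightE subr_eq0 eq_sym height_neq.
Qed.

Lemma above_sub x : above x \subset ~: H0.
Proof. by apply/fintype.subsetP => h; rewrite inE => /andP[]. Qed.

Lemma above_nested p x y : arr_compl a H0 p -> cell H0 p x -> cell H0 p y ->
  above x \subset above y \/ above y \subset above x.
Proof.
move=> H0p px py.
case: (boolP (above x \subset above y)) => [|/subsetPn[h /setIdP[hH1 hx] hy]]; [by left|right].
apply/fintype.subsetP => h' /setIdP[h'H1 h'y]; apply: contraT => h'x.
have {}hy : height h y <= 0 by rewrite leNgt; apply: contra hy => ?; apply/setIdP.
have {}h'x : height h' x <= 0 by rewrite leNgt; apply: contra h'x => ?; apply/setIdP.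
have hh' : h != h' by apply: contraTneq hx => ->; rewrite -leNgt.
have := height_order H0p py hH1 h'H1 hh'; rewrite -(height_order H0p px hH1 h'H1 hh').
by rewrite !subr_gt0 (le_lt_trans hy h'y) ltNge (le_trans h'x (ltW hx)).
Qed.

Lemma above_subset p x y : arr_compl a H0 p -> cell H0 p x -> cell H0 p y ->
  (#|above x| <= #|above y|)%N -> above x \subset above y.
Proof.
move=> H0p px py xy; case: (above_nested H0p px py) => // yx.
by have /eqP -> : above x == above y by rewrite eq_sym eqEcard yx.
Qed.

Lemma sepset_compl_above x y : arr_compl a T x -> arr_compl a T y ->
  sepset (~: H0) x y = (above x :\: above y) :|: (above y :\: above x).
Proof.
move=> Tx Ty; apply/setP => h; rewrite !inE; case: (boolP (h \in H0)) => //= hH0.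
have [hT hH1] : h \in T /\ h \in ~: H0 by rewrite !inE.
rewrite /height !divr_gt0_sign ?(arr_compl_neq0 Tx) ?(arr_compl_neq0 Ty) ?H1v //.
by case: (0 < f h x); case: (0 < f h y); case: (0 < f h v).
Qed.

Lemma card_sepset_fiber p x y : arr_compl a H0 p -> cell H0 p x -> cell H0 p y ->
  arr_compl a T x -> arr_compl a T y ->
  #|sepset T x y| = (#|above x| - #|above y| + (#|above y| - #|above x|))%N.
Proof.
move=> H0p; wlog xy : x y / (#|above x| <= #|above y|)%N => [wlog px py Tx Ty|px py Tx Ty].
  case: (leqP #|above x| #|above y|) => [|/ltnW] xy; first exact: wlog.
  by rewrite sepsetC addnC; exact: wlog.
have sepH0 : sepset H0 x y = finset.set0.
  apply/setP => i; rewrite !inE; case: (boolP (i \in H0)) => //= iH0.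
  by rewrite px.2 // py.2 // eqxx.
have Pxy := above_subset H0p px py xy.
rewrite (card_sepset_split _ H0) sepH0 cards0 (sepset_compl_above Tx Ty).
have /eqP -> : above x :\: above y == finset.set0 by rewrite finset.setD_eq0.
rewrite finset.set0U cardsD (finset.setIidPr Pxy).
by move/eqP: xy => ->.
Qed.

Lemma above_full x : #|above x| = l -> above x = ~: H0.
Proof. by move=> above_l; apply/eqP; rewrite eqEcard above_l leqnn andbT; exact: above_sub. Qed.

Lemma region_adj_lift p p' x y : cell H0 p x -> cell H0 p' y ->
  arr_compl a T x -> arr_compl a T y -> region_adj a H0 (cell H0 p) (cell H0 p') ->
  region_adj a T (cell T x) (cell T y) <-> above x = above y.
Proof.
move=> px py Tx Ty; rewrite -(cell_eq px) -(cell_eq py).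
have [H0x H0y] := (arr_compl_subset (finset.subsetT H0) Tx,
                   arr_compl_subset (finset.subsetT H0) Ty).
move=> /(region_adj_cell H0x H0y) sepH0.
rewrite (region_adj_cell Tx Ty) (card_sepset_split _ H0) sepH0 (sepset_compl_above Tx Ty).
split=> [/eqP|->]; last by rewrite finset.setDv finset.setU0 cards0.
rewrite add1n eqSS cards_eq0 finset.setU_eq0 !finset.setD_eq0 => /andP[Pxy Pyx].
by apply/eqP; rewrite finset.eqEsubset Pxy Pyx.
Qed.

Definition fiber_point p k x := [/\ cell H0 p x, arr_compl a T x & #|above x| = k].

Lemma exists_fiber_points p : arr_compl a H0 p ->
  exists X : nat -> 'rV[R]_d, forall k, (k <= l)%N -> fiber_point p k (X k).
Proof.
move=> H0p; suff /choice[X X_k] k : exists x, (k <= l)%N -> fiber_point p k x by exists X.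
case: (leqP k l) => [kl|]; last by exists p.
have neg_height_inj : {in ~: H0 &, injective (fun h => - height h p)}.
  by move=> h h' hH1 h'H1 /oppr_inj; apply: contra_eq; exact: height_neq.
have [t [t_height t_k]] := exists_threshold neg_height_inj kl.
have above_t h : h \in ~: H0 -> (0 < height h (p + t *: v)) = (- height h p < t).
  by move=> hH1; rewrite height_translate // -[RHS]subr_gt0 opprK addrC.
exists (p + t *: v) => _; split; first exact: cell_translate.
- move=> i _; case: (boolP (i \in H0)) => iH0; first exact: (cell_translate t H0p).1.
  have iH1 : i \in ~: H0 by rewrite inE.
  rewrite /hyp /=; apply/eqP; rewrite -height_eq0 // height_translate // addrC addr_eq0 eq_sym.
  exact: t_height.
- rewrite -t_k; apply: eq_card => h; rewrite /above !finset.in_set.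
  by case: (boolP (h \in H0)) => //= hH0; rewrite above_t ?inE.
Qed.

Lemma fiber_path_enum p (X : nat -> 'rV[R]_d) : arr_compl a H0 p ->
  (forall k, (k <= l)%N -> fiber_point p k (X k)) ->
  path_enum (region_adj a T) [set C | regions a T C /\ C `<=` cell H0 p] l
    (fun k => cell T (X k)).
Proof.
move=> H0p X_k.
have dist i j : (i <= l)%N -> (j <= l)%N -> #|sepset T (X i) (X j)| = (i - j + (j - i))%N.
  move=> il jl; have [pi Ti ki] := X_k i il; have [pj Tj kj] := X_k j jl.
  by rewrite (card_sepset_fiber H0p pi pj Ti Tj) ki kj.
split=> [i j il jl|| i j il jl].
- have [[_ Ti _] [_ Tj _]] := (X_k i il, X_k j jl).
  move/(cell_eq_sepset0 Ti Tj)/eqP; rewrite -cards_eq0 dist //; lia.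
- apply/seteqP; split=> [C /(fiber_cellP _ H0p) [y [py Ty ->]] | _ [k kl <-]].
    have kl : (#|above y| <= l)%N by apply/subset_leq_card/above_sub.
    have [pk Tk above_k] := X_k _ kl; exists #|above y| => //.
    apply/(cell_eq_sepset0 Tk Ty)/eqP; rewrite -cards_eq0.
    by rewrite (card_sepset_fiber H0p pk py Tk Ty) above_k subnn.
  by have [pk Tk _] := X_k k kl; apply/(fiber_cellP _ H0p); exists (X k).
- have [[_ Ti _] [_ Tj _]] := (X_k i il, X_k j jl).
  rewrite (region_adj_cell Ti Tj) dist //; lia.
Qed.

End Fibers.

Theorem lemma2p6 (R : realType) (d : nat) (I : finType) (a : I -> 'rV[R]_d)
  (n : nat) (H0 : {set I}) :
  (* a finite set of (distinct) linear hyperplanes *)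
  (forall i, a i != 0) ->
  (forall i j, hyp a i = hyp a j -> i = j) ->
  (* supersolvable of rank n >= 3 with decomposition H = H0 ⊔ H1, H1 = ~: H0 *)
  arr_rank a [set: I] = n -> (3 <= n)%N ->
  H0 != finset.set0 -> ~: H0 != finset.set0 ->
  supersolvable a H0 -> arr_rank a H0 = n.-1 ->
  (forall i j, i \in ~: H0 -> j \in ~: H0 -> i != j ->
     exists2 k, k \in H0 & hyp a i `&` hyp a j `<=` hyp a k) ->
  let fiber := fun C0 : set 'rV[R]_d =>
    [set C | regions a [set: I] C /\ C `<=` C0] in
  let G := region_adj a [set: I] in
  let l := #|~: H0| in
  (* (i) *)
  (forall C0, regions a H0 C0 -> exists A, path_enum G (fiber C0) l A) /\
  (* (ii) *)
  (forall C0 C0', region_adj a H0 C0 C0' ->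
     exists A B, [/\ path_enum G (fiber C0) l A, path_enum G (fiber C0') l B,
       G (A 0%N) (B 0%N), G (A l) (B l) &
       forall i j, (i <= l)%N -> (j <= l)%N -> G (A i) (B j) -> i = j]) /\
  (* (iii) *)
  (forall C0 C0', regions a H0 C0 -> regions a H0 C0' -> C0 <> C0' ->
     ~ region_adj a H0 C0 C0' ->
     forall C C', fiber C0 C -> fiber C0' C' -> ~ G C C').
Proof.
move=> a0 a_inj rankT n3 _ _ _ rank0 modular fiber G l.
have rank01 : (arr_rank a H0 < arr_rank a [set: I])%N by rewrite rankT rank0; case: (n) n3.
have [v [H0v H1v]] := exists_modular_direction a0 a_inj rank01 modular.
have fiber_path := fiber_path_enum modular H0v H1v.
have fiber_points := exists_fiber_points modular H0v H1v.
split; [|split].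
- move=> _ /regionsP[p H0p ->]; have [X X_k] := fiber_points p H0p.
  by exists (fun k => cell a [set: I] (X k)); exact: fiber_path.
- move=> _ _ /[dup] [[/regionsP[p H0p ->] [/regionsP[p' H0p' ->] _]]] adj.
  have [[X X_k] [Y Y_k]] := (fiber_points p H0p, fiber_points p' H0p').
  have lift i j : (i <= l)%N -> (j <= l)%N ->
      G (cell a [set: I] (X i)) (cell a [set: I] (Y j)) <->
      above a H0 v (X i) = above a H0 v (Y j).
    move=> il jl; have [[pi Ti _] [pj Tj _]] := (X_k i il, Y_k j jl).
    exact: (region_adj_lift H1v pi pj Ti Tj adj).
  exists (fun k => cell a [set: I] (X k)), (fun k => cell a [set: I] (Y k)).
  have [[_ _ X0] [_ _ Y0]] := (X_k 0%N (leq0n l), Y_k 0%N (leq0n l)).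
  have [[_ _ Xl] [_ _ Yl]] := (X_k l (leqnn l), Y_k l (leqnn l)).
  split; try exact: fiber_path.
  + by apply/lift; rewrite ?(cards0_eq X0) ?(cards0_eq Y0).
  + by apply/lift; rewrite ?(above_full Xl) ?(above_full Yl).
  + move=> i j il jl /(lift i j il jl) aboveXY.
    by have [[_ _ <-] [_ _ <-]] := (X_k i il, Y_k j jl); rewrite aboveXY.
- move=> _ _ /regionsP[p H0p ->] /regionsP[p' H0p' ->] pp' not_adj C C'.
  move=> /(fiber_cellP _ H0p)[x [px Tx ->]] /(fiber_cellP _ H0p')[y [py Ty ->]].
  by move=> /(region_adj_restrict H0 Tx Ty); rewrite (cell_eq px) (cell_eq py); case.
Qed.
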